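(* Let $\mathbb{H}$ be a Hilbert space with norm $\|\cdot\|$, $\varepsilon>0$, and $\mathcal{D}=\{\phi_j\}_{j\in\mathbb{N}^*}$ an infinite countable ordered dictionary in $\mathbb{H}$ with truncations $\mathcal{D}_p=\{\phi_1,\dots,\phi_p\}$, and let $\lambda_p=4\varepsilon(\sqrt{\ln p}+1)$ for $p\in\mathbb{N}^*$. Let $1<q<2$, $r>0$, $R>0$ and assume $f\in\mathcal{B}_{q,r}(R)$. Then there exists $C_q>0$ depending only on $q$ such that for all $p\in\mathbb{N}^*$, $$\inf_{h\in\mathcal{L}_1(\mathcal{D}_p)}\big(\|f-h\|^2+\lambda_p\|h\|_{\mathcal{L}_1(\mathcal{D}_p)}\big)\le C_q\max\Big(R^q\lambda_p^{2-q},\ (Rp^{-r})^{\frac{2q}{2-q}}\lambda_p^{\frac{4(1-q)}{2-q}}\Big).$$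
   Context: $\mathcal{L}_1(\mathcal{D}_p)$ is the span of $\phi_1,\dots,\phi_p$ with norm $\|h\|_{\mathcal{L}_1(\mathcal{D}_p)}=\inf\{\sum_{j=1}^p|\theta_j|:h=\sum_{j=1}^p\theta_j\phi_j\}$. Space $\mathcal{L}_{1,r}$: $g\in\mathbb{H}$ belongs to $\mathcal{L}_{1,r}$ if there is $C>0$ such that for all $p\in\mathbb{N}^*$ there exists $g_p\in\mathcal{L}_1(\mathcal{D}_p)$ with $\|g_p\|_{\mathcal{L}_1(\mathcal{D}_p)}\le C$ and $\|g-g_p\|\le Cp^{-r}$; the smallest such $C$ is $\|g\|_{\mathcal{L}_{1,r}}$. Space $\mathcal{B}_{q,r}(R)$: with $\alpha=1/q-1/2$, $g\in\mathcal{B}_{q,r}(R)$ if for all $\delta>0$, $\inf_{h\in\mathcal{L}_{1,r}}(\|g-h\|+\delta\|h\|_{\mathcal{L}_{1,r}})\le R\delta^{2\alpha}$. *)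

From HB Require Import structures.
From mathcomp Require Import all_boot all_order all_algebra.
From mathcomp Require Import all_classical all_reals all_analysis.
Set Implicit Arguments. Unset Strict Implicit. Unset Printing Implicit Defensive.
Import Order.TTheory GRing.Theory Num.Theory.
Import numFieldNormedType.Exports.
Local Open Scope classical_set_scope.
Local Open Scope ring_scope.

Section Defs.
Variable R : realType.

Definition is_inner_product (V : normedModType R) (ip : V -> V -> R) : Prop :=
  (forall x y, ip x y = ip y x) /\
  (forall (a : R) (x y z : V), ip (a *: x + y) z = a * ip x z + ip y z) /\
  (forall x, `|x| = Num.sqrt (ip x x)).

Variable V : normedModType R.

(* dictionary phi_1, phi_2, ... (phi 0 is unused); D_p = {phi_1,...,phi_p} *)
Definition lin_comb (phi : nat -> V) (p : nat) (theta : nat -> R) : V :=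
  \sum_(1 <= j < p.+1) theta j *: phi j.

Definition l1_coef (p : nat) (theta : nat -> R) : R :=
  \sum_(1 <= j < p.+1) `|theta j|.

Definition inL1 (phi : nat -> V) (p : nat) (h : V) : Prop :=
  exists theta, h = lin_comb phi p theta.

Definition L1norm (phi : nat -> V) (p : nat) (h : V) : R :=
  inf [set s | exists theta, h = lin_comb phi p theta /\ s = l1_coef p theta].

Definition L1r_const (phi : nat -> V) (r : R) (g : V) (C : R) : Prop :=
  0 < C /\ forall p : nat, (0 < p)%N ->
    exists gp, inL1 phi p gp /\ L1norm phi p gp <= C /\
               `|g - gp| <= C * (p%:R `^ (- r)).

Definition inL1r (phi : nat -> V) (r : R) (g : V) : Prop :=
  exists C, L1r_const phi r g C.

Definition L1rnorm (phi : nat -> V) (r : R) (g : V) : R :=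
  inf [set C | L1r_const phi r g C].

Definition inB (phi : nat -> V) (q r Rad : R) (g : V) : Prop :=
  forall delta : R, 0 < delta ->
    inf [set x | exists h, inL1r phi r h /\
                 x = `|g - h| + delta * L1rnorm phi r h]
      <= Rad * delta `^ (2 * (q^-1 - 2^-1)).

Definition lambda (eps : R) (p : nat) : R :=
  4 * eps * (Num.sqrt (ln p%:R) + 1).

Definition lasso_oracle (phi : nat -> V) (p : nat) (lam : R) (f : V) : R :=
  inf [set x | exists h, inL1 phi p h /\
               x = `|f - h| ^+ 2 + lam * L1norm phi p h].

End Defs.

(* Taking delta = (lambda/R)^(q/2) in the definition of B_{q,r}(R) gives
   h in L_{1,r} with ||f - h|| <= 2A and ||h||_{L_{1,r}} <= 2A/delta, where
   A = R delta^(2 alpha).  Approximating h in D_p by some g_p with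
   ||g_p||_{L_1(D_p)} <= 3A/delta and ||h - g_p|| <= 3A/delta p^(-r), the
   oracle at g_p is bounded in terms of A^2 = lambda A/delta = R^q lambda^(2-q)
   and (A/delta p^(-r))^2; the latter is a weighted geometric mean of the two
   terms of the max, with weights 2 - 2/q and 2/q - 1. *)
From HB Require Import structures.
From mathcomp Require Import all_boot all_order all_algebra.
From mathcomp Require Import all_classical all_reals all_analysis.
From mathcomp Require Import ring lra.
Set Implicit Arguments.
Unset Strict Implicit.
Unset Printing Implicit Defensive.
Import Order.TTheory GRing.Theory Num.Theory.
Import numFieldNormedType.Exports.
Local Open Scope classical_set_scope.
Local Open Scope ring_scope.

Section Exponents.
Variable R : realType.

Lemma powR_geomean_le_max (x y s t : R) : 0 < x -> 0 < y -> 0 <= s -> 0 <= t ->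
  s + t = 1 -> x `^ s * y `^ t <= Num.max x y.
Proof.
move=> x0 y0 s0 t0 st1; set m := Num.max x y.
have m0 : 0 < m by rewrite lt_max x0.
have le_m (z e : R) : 0 <= e -> 0 < z -> z <= m -> z `^ e <= m `^ e.
  by move=> e0 z0 zm; apply: ge0_ler_powR; rewrite // nnegrE ltW.
apply: (@le_trans _ _ (m `^ s * m `^ t)).
  by apply: ler_pM; rewrite ?powR_ge0 //; apply: le_m; rewrite ?le_max ?lexx ?orbT.
by rewrite -powRD ?st1 ?powRr1 ?(ltW m0) // implybE gt_eqF ?orbT.
Qed.

Variables (q lam Rad : R).
Hypotheses (q_gt1 : 1 < q) (q_lt2 : q < 2) (lam_gt0 : 0 < lam) (Rad_gt0 : 0 < Rad).

Local Notation delta := ((lam / Rad) `^ (q / 2)).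
Local Notation A := (Rad * delta `^ (2 * (q^-1 - 2^-1))).

Let q_gt0 : 0 < q. Proof. exact: lt_trans ltr01 q_gt1. Qed.
Let q_neq0 : q != 0. Proof. by rewrite gt_eqF. Qed.
Let two_sub_q_neq0 : 2 - q != 0. Proof. by rewrite gt_eqF // subr_gt0. Qed.

Let pos {x : R} : 0 < x -> x \is Num.pos. Proof. by rewrite posrE. Qed.

Lemma delta_gt0 : 0 < delta.
Proof. by apply: powR_gt0; exact: divr_gt0. Qed.

Lemma rate_gt0 : 0 < A.
Proof. by apply: mulr_gt0 => //; apply: powR_gt0; exact: delta_gt0. Qed.

Let ln_delta : ln delta = q / 2 * (ln lam - ln Rad).
Proof. by rewrite ln_powR ln_div ?pos. Qed.

Let ln_rate : ln A = ln Rad + (2 / q - 1) * (q / 2 * (ln lam - ln Rad)).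
Proof.
have dp : delta `^ (2 * (q^-1 - 2^-1)) \is Num.pos by apply/pos/powR_gt0/delta_gt0.
rewrite (lnM (pos Rad_gt0) dp) ln_powR ln_delta.
by congr (_ + _ * _); field.
Qed.

Let main_gt0 : 0 < Rad `^ q * lam `^ (2 - q).
Proof. exact: mulr_gt0 (powR_gt0 _ Rad_gt0) (powR_gt0 _ lam_gt0). Qed.

Let ln_main : ln (Rad `^ q * lam `^ (2 - q)) = q * ln Rad + (2 - q) * ln lam.
Proof. by rewrite (lnM (pos (powR_gt0 _ Rad_gt0)) (pos (powR_gt0 _ lam_gt0))) !ln_powR. Qed.

Lemma rate_sqr : A ^+ 2 = Rad `^ q * lam `^ (2 - q).
Proof.
rewrite expr2; apply: (ln_inj (pos (mulr_gt0 rate_gt0 rate_gt0)) (pos main_gt0)).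
by rewrite (lnM (pos rate_gt0) (pos rate_gt0)) ln_main ln_rate; field.
Qed.

Let rate_over_delta_gt0 : 0 < A / delta.
Proof. exact: divr_gt0 rate_gt0 delta_gt0. Qed.

Let ln_rate_over_delta : ln (A / delta) = ln A - ln delta.
Proof. exact: ln_div (pos rate_gt0) (pos delta_gt0). Qed.

Lemma mul_rate_over_delta : lam * (A / delta) = Rad `^ q * lam `^ (2 - q).
Proof.
apply: (ln_inj (pos (mulr_gt0 lam_gt0 rate_over_delta_gt0)) (pos main_gt0)).
rewrite (lnM (pos lam_gt0) (pos rate_over_delta_gt0)) ln_rate_over_delta.
by rewrite ln_main ln_rate ln_delta; field.
Qed.

Lemma rate_over_delta_sqr (P : R) : 0 < P ->
  (A / delta * P) ^+ 2 =
  (Rad `^ q * lam `^ (2 - q)) `^ (2 - 2 / q) *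
  ((Rad * P) `^ (2 * q / (2 - q)) * lam `^ (4 * (1 - q) / (2 - q))) `^ (2 / q - 1).
Proof.
move=> P_gt0.
have RP_gt0 : 0 < Rad * P := mulr_gt0 Rad_gt0 P_gt0.
have KP_gt0 : 0 < A / delta * P := mulr_gt0 rate_over_delta_gt0 P_gt0.
have Y_gt0 : 0 < (Rad * P) `^ (2 * q / (2 - q)) * lam `^ (4 * (1 - q) / (2 - q)).
  exact: mulr_gt0 (powR_gt0 _ RP_gt0) (powR_gt0 _ lam_gt0).
rewrite expr2; apply: (ln_inj (pos (mulr_gt0 KP_gt0 KP_gt0))).
  exact/pos/mulr_gt0/powR_gt0/Y_gt0/powR_gt0/main_gt0.
rewrite (lnM (pos KP_gt0) (pos KP_gt0)) (lnM (pos rate_over_delta_gt0) (pos P_gt0)).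
rewrite (lnM (pos (powR_gt0 _ main_gt0)) (pos (powR_gt0 _ Y_gt0))) !ln_powR ln_main.
rewrite (lnM (pos (powR_gt0 _ RP_gt0)) (pos (powR_gt0 _ lam_gt0))) !ln_powR.
rewrite (lnM (pos Rad_gt0) (pos P_gt0)) ln_rate_over_delta ln_rate ln_delta.
by field; rewrite q_neq0 two_sub_q_neq0.
Qed.

Lemma rate_over_delta_sqr_le_max (P : R) : 0 < P ->
  (A / delta * P) ^+ 2 <=
  Num.max (Rad `^ q * lam `^ (2 - q))
          ((Rad * P) `^ (2 * q / (2 - q)) * lam `^ (4 * (1 - q) / (2 - q))).
Proof.
move=> P_gt0; rewrite rate_over_delta_sqr //.
rewrite powR_geomean_le_max ?mulr_gt0 ?powR_gt0 ?mulr_gt0 //.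
- by rewrite subr_ge0 ler_pdivrMr ?q_gt0 // ler_pMr // ltW.
- by rewrite subr_ge0 ler_pdivlMr ?q_gt0 // mul1r ltW.
- by ring.
Qed.

End Exponents.

Section Approximation.
Variables (R : realType) (V : normedModType R) (phi : nat -> V).

Lemma L1norm_ge0 p h : inL1 phi p h -> 0 <= L1norm phi p h.
Proof.
case=> th ->; apply: lb_le_inf; first by exists (l1_coef p th), th.
by move=> _ [th' [_ ->]]; exact: sumr_ge0.
Qed.

Lemma L1norm_le_l1_coef p th : L1norm phi p (lin_comb phi p th) <= l1_coef p th.
Proof.
apply: ge_inf; last by exists th.
by exists 0 => _ [th' [_ ->]]; exact: sumr_ge0.
Qed.

Lemma L1r_const0 r : L1r_const phi r 0 1.
Proof.
split=> // p _; have lin0 : lin_comb phi p (fun=> 0) = 0.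
  by rewrite /lin_comb big1 // => j _; rewrite scale0r.
exists 0; split; first by exists (fun=> 0).
split; last by rewrite subrr normr0 mul1r powR_ge0.
rewrite -lin0 (le_trans (L1norm_le_l1_coef _ _)) //.
by rewrite /l1_coef big1 // => j _; rewrite normr0.
Qed.

Lemma L1rnorm_ge0 r h : inL1r phi r h -> 0 <= L1rnorm phi r h.
Proof.
case=> C hC; apply: lb_le_inf; first by exists C.
by move=> C' [C'_gt0 _]; exact: ltW.
Qed.

Lemma lasso_oracle_le p (lam : R) f g : 0 <= lam -> inL1 phi p g ->
  lasso_oracle phi p lam f <= `|f - g| ^+ 2 + lam * L1norm phi p g.
Proof.
move=> lam_ge0 gL1; apply: ge_inf; last by exists g.
exists 0 => _ [h [hL1 ->]].
by rewrite addr_ge0 ?sqr_ge0 // mulr_ge0 // L1norm_ge0.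
Qed.

Lemma inB_near (q r Rad : R) f (delta e : R) :
  inB phi q r Rad f -> 0 < delta -> 0 < e ->
  exists h, inL1r phi r h /\
    `|f - h| + delta * L1rnorm phi r h < Rad * delta `^ (2 * (q^-1 - 2^-1)) + e.
Proof.
move=> fB delta_gt0 e_gt0.
set E := [set x | exists h, inL1r phi r h /\ x = `|f - h| + delta * L1rnorm phi r h].
have E_inf : has_inf E.
  split.
    by exists (`|f - 0| + delta * L1rnorm phi r 0), 0; split=> //; exists 1; exact: L1r_const0.
  exists 0 => _ [h [hL1r ->]].
  by rewrite addr_ge0 // mulr_ge0 // ?L1rnorm_ge0 // ltW.
have [_ [h [hL1r ->]] near_inf] := inf_adherent e_gt0 E_inf.
by exists h; split=> //; apply: lt_le_trans near_inf _; rewrite lerD2r; exact: fB.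
Qed.

Lemma L1r_approx (r : R) h (M : R) : inL1r phi r h -> L1rnorm phi r h < M ->
  forall p, (0 < p)%N -> exists g, inL1 phi p g /\
    L1norm phi p g <= M /\ `|h - g| <= M * p%:R `^ (- r).
Proof.
move=> [C0 hC0] hM p p_gt0.
have C_inf : has_inf [set C | L1r_const phi r h C].
  by split; [exists C0 | exists 0 => C' [C'_gt0 _]; exact: ltW].
have gap_gt0 : 0 < M - L1rnorm phi r h by rewrite subr_gt0.
have [C [C_gt0 hC] ltC] := inf_adherent gap_gt0 C_inf.
have CM : C <= M by move: ltC; rewrite addrCA subrr addr0 => /ltW.
have [g [gL1 [gN hg]]] := hC p p_gt0.
exists g; split=> //; split; first exact: le_trans gN CM.
by rewrite (le_trans hg) // ler_wpM2r ?powR_ge0.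
Qed.

Lemma inB_approx (q r Rad : R) f (delta : R) p :
  inB phi q r Rad f -> 0 < delta -> 0 < Rad -> (0 < p)%N ->
  let A := Rad * delta `^ (2 * (q^-1 - 2^-1)) in
  exists g, inL1 phi p g /\ L1norm phi p g <= 3 * (A / delta) /\
    `|f - g| <= 2 * A + 3 * (A / delta) * p%:R `^ (- r).
Proof.
move=> fB delta_gt0 Rad_gt0 p_gt0 A.
have A_gt0 : 0 < A by rewrite mulr_gt0 ?powR_gt0.
have [h [hL1r]] := inB_near fB delta_gt0 A_gt0; rewrite -/A => near_f.
have N_ge0 := L1rnorm_ge0 hL1r.
have N_lt : L1rnorm phi r h < 3 * (A / delta).
  rewrite mulrA ltr_pdivlMr // [_ * delta]mulrC.
  have : 0 <= `|f - h| by [].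
  lra.
have [g [gL1 [gN hg]]] := L1r_approx hL1r N_lt p_gt0.
exists g; split=> //; split=> //.
apply: le_trans (ler_distD h f g) _; rewrite -mulrA.
have : 0 <= delta * L1rnorm phi r h by rewrite mulr_ge0 // ltW.
lra.
Qed.

End Approximation.

Lemma lambda_gt0 (R : realType) (eps : R) p : 0 < eps -> 0 < lambda eps p.
Proof. by move=> eps_gt0; rewrite !mulr_gt0 // ltr_wpDl ?sqrtr_ge0. Qed.

Theorem lemma5p4 (R : realType) (q : R) (hq1 : 1 < q) (hq2 : q < 2) :
  exists Cq : R, 0 < Cq /\
  forall (V : completeNormedModType R) (ip : V -> V -> R)
         (eps : R) (phi : nat -> V) (r Rad : R) (f : V),
    is_inner_product ip ->
    0 < eps ->
    0 < r -> 0 < Rad ->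
    inB phi q r Rad f ->
    forall p : nat, (0 < p)%N ->
      lasso_oracle phi p (lambda eps p) f <=
      Cq * Num.max (Rad `^ q * lambda eps p `^ (2 - q))
                   ((Rad * p%:R `^ (- r)) `^ (2 * q / (2 - q)) *
                    lambda eps p `^ (4 * (1 - q) / (2 - q))).
Proof.
exists 29; split=> // V ip eps phi r Rad f _ eps_gt0 _ Rad_gt0 fB p p_gt0.
have lam_gt0 := lambda_gt0 p eps_gt0; set lam := lambda eps p in lam_gt0 *.
have P_gt0 : 0 < p%:R `^ (- r) :> R by rewrite powR_gt0 // ltr0n.
have delta_pos := delta_gt0 q lam_gt0 Rad_gt0.
have A_pos := rate_gt0 q lam_gt0 Rad_gt0.
have [g [gL1 [gN fg]]] := inB_approx fB delta_pos Rad_gt0 p_gt0.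
apply: le_trans (lasso_oracle_le f (ltW lam_gt0) gL1) _.
have A2 := rate_sqr hq1 lam_gt0 Rad_gt0.
have lamK := mul_rate_over_delta hq1 lam_gt0 Rad_gt0.
have KP2 := rate_over_delta_sqr_le_max hq1 hq2 lam_gt0 Rad_gt0 P_gt0.
set X := Rad `^ q * _ in A2 lamK KP2 *; set m := Num.max X _ in KP2 *.
set delta := (lam / Rad) `^ (q / 2) in delta_pos A_pos gN fg A2 lamK KP2.
set A := Rad * delta `^ _ in A_pos gN fg A2 lamK KP2.
set K := A / delta in gN fg lamK KP2; set P := p%:R `^ (- r) in P_gt0 fg KP2.
have X_le : X <= m by rewrite le_max lexx.
have KP_ge0 : 0 <= K * P := mulr_ge0 (ltW (divr_gt0 A_pos delta_pos)) (ltW P_gt0).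
have fg2 : `|f - g| ^+ 2 <= 8 * A ^+ 2 + 18 * (K * P) ^+ 2.
  have := normr_ge0 (f - g); have := sqr_ge0 (2 * A - 3 * (K * P)).
  rewrite -mulrA in fg; rewrite !expr2; nra.
have lamL : lam * L1norm phi p g <= 3 * X by rewrite -lamK mulrCA ler_pM2l.
lra.
Qed.
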